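(* A quadruple of points of the quaternionic projective line $\mathbb{P}^1(\mathbb{H})$ is semi-stable if and only if no point is repeated more than twice.
   Context: $\mathbb{H}$ denotes Hamilton's quaternions (generators $i,j,k$), $\mathbb{P}^1(\mathbb{H})$ the set of rank-one right $\mathbb{H}$-submodules of $\mathbb{H}^2$. Let $\tau(x_1,x_2,x_3,x_4)=(-\bar x_2,\bar x_1,-\bar x_4,\bar x_3)$ on $\mathbb{C}^4$. Points of $\mathbb{P}^1(\mathbb{H})$ are identified with complex planes of $\mathbb{C}^4$ of the form $\langle x,\tau(x)\rangle$, $x\ne0$, the plane $\langle x,\tau(x)\rangle$ corresponding to the right $\mathbb{H}$-module generated by $(x_1+jx_2,\,x_3+jx_4)$. A quadruple of points of $\mathbb{P}^1(\mathbb{H})$ is semi-stable if the corresponding quadruple of complex planes is semi-stable for the diagonal action of $\mathrm{SL}_4(\mathbb{C})$ on $\mathrm{Gr}(2,4)^4$ with the Plücker linearization, i.e. some $\mathrm{SL}_4(\mathbb{C})$-invariant section of a positive power of $\bigotimes_i\mathrm{pr}_i^*\mathcal{O}(1)$ does not vanish. *)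

From HB Require Import structures.
From mathcomp Require Import all_boot all_order all_algebra.
From mathcomp Require Import mpoly.
From mathcomp Require Import complex.
From mathcomp Require Import Rstruct.


Set Implicit Arguments.
Unset Strict Implicit.
Unset Printing Implicit Defensive.

Import Order.TTheory GRing.Theory Num.Theory.
Local Open Scope ring_scope.

Definition CC : Type := complex Rdefinitions.R.

Definition tau (x : 'rV[CC]_4) : 'rV[CC]_4 :=
  \row_(j < 4)
    (if (j : nat) == 0%N then - (x 0 (inord 1))^*
     else if (j : nat) == 1%N then (x 0 (inord 0))^*
     else if (j : nat) == 2%N then - (x 0 (inord 3))^*
     else (x 0 (inord 2))^*).

(* The complex plane <x, tau x> of C^4, as the row space of a 2x4 matrix.
   A point of P^1(H) represented by the nonzero x in C^4 is this plane. *)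
Definition hplane (x : 'rV[CC]_4) : 'M[CC]_(2, 4) := col_mx x (tau x).

Definition plpair (k : 'I_6) : nat * nat :=
  match (k : nat) with
  | 0 => (0, 1) | 1 => (0, 2) | 2 => (0, 3)
  | 3 => (1, 2) | 4 => (1, 3) | _ => (2, 3)
  end%N.

Definition plucker (M : 'M[CC]_(2, 4)) (k : 'I_6) : CC :=
  let a : 'I_4 := inord (plpair k).1 in
  let b : 'I_4 := inord (plpair k).2 in
  M 0 a * M 1 b - M 0 b * M 1 a.

Definition plucker4 (Ms : 'I_4 -> 'M[CC]_(2, 4)) : 'I_24 -> CC :=
  fun j => plucker (Ms (inord (j %/ 6)%N)) (inord (j %% 6)%N).

(* F is multihomogeneous of multidegree (m,m,m,m) in the four blocks of
   Plücker variables: it represents a section of (⊗_i pr_i^* O(1))^{⊗ m}. *)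
Definition multihom (m : nat) (F : {mpoly CC[24]}) : Prop :=
  forall mo, mo \in msupp F ->
    forall i : 'I_4, (\sum_(j < 24 | (j %/ 6)%N == i) mo j)%N = m.

Definition sl4_invariant (F : {mpoly CC[24]}) : Prop :=
  forall (g : 'M[CC]_4), \det g = 1 ->
  forall Ms : 'I_4 -> 'M[CC]_(2, 4), (forall i, \rank (Ms i) = 2%N) ->
    F.@[plucker4 (fun i => Ms i *m g)] = F.@[plucker4 Ms].

Definition semistable_planes (Ms : 'I_4 -> 'M[CC]_(2, 4)) : Prop :=
  exists (m : nat) (F : {mpoly CC[24]}),
    (0 < m)%N /\ multihom m F /\ sl4_invariant F /\ F.@[plucker4 Ms] != 0.

Definition semistable_P1H (xs : 'I_4 -> 'rV[CC]_4) : Prop :=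
  semistable_planes (fun i => hplane (xs i)).

Definition multiplicity (xs : 'I_4 -> 'rV[CC]_4) (i : 'I_4) : nat :=
  #|[set j : 'I_4 | (hplane (xs j) == hplane (xs i))%MS]|.

From HB Require Import structures.
From mathcomp Require Import all_boot all_order all_algebra.
From mathcomp Require Import mpoly complex Rstruct.
From mathcomp Require Import ring zify.

(* Points of P^1(H) are the planes <x, tau x> of C^4.  Since tau is antilinear
   with tau^2 = -1, a tau-stable subspace has even dimension, so two such planes
   are equal or complementary: the determinant of their stacked bases, a
   bilinear pairing of their Plücker vectors and an SL_4-invariant, vanishes
   exactly when the points coincide.  If no point occurs three times, the four
   points split into two pairs of distinct points, and the product of the two
   pairings is an invariant of multidegree (1,1,1,1) not vanishing at the
   quadruple.  If three points coincide with a plane W, the one-parameter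
   subgroup acting by t on W and by t^-1 on a complement multiplies the Plücker
   coordinates of those three points by t^2 and those of the fourth by t^-2
   times a polynomial in t; an invariant of multidegree (m,m,m,m) thus equals
   t^(4m) times a polynomial in t for every t != 0, which forces its value at
   the quadruple to be 0. *)

Set Implicit Arguments.
Unset Strict Implicit.
Unset Printing Implicit Defensive.

Import Order.TTheory GRing.Theory Num.Theory.
Local Open Scope ring_scope.

Lemma ord4_ind (P : 'I_4 -> Prop) :
  P (inord 0) -> P (inord 1) -> P (inord 2) -> P (inord 3) -> forall j, P j.
Proof.
move=> P0 P1 P2 P3 j; rewrite -[j]inord_val.
by case: j => [[|[|[|[|j]]]] ?].
Qed.

Lemma tauD (x y : 'rV[CC]_4) : tau (x + y) = tau x + tau y.
Proof.
apply/rowP; apply: ord4_ind; rewrite !mxE !inordK //= ?rmorphD ?rmorphN //; ring.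
Qed.

Lemma tauZ (a : CC) (x : 'rV[CC]_4) : tau (a *: x) = a^* *: tau x.
Proof.
apply/rowP; apply: ord4_ind; rewrite !mxE !inordK //= ?rmorphM ?rmorphN //; ring.
Qed.

Lemma tau0 : tau 0 = 0.
Proof. by have := tauZ 0 0; rewrite scale0r conjC0 scale0r. Qed.

Lemma tauK (x : 'rV[CC]_4) : tau (tau x) = - x.
Proof.
apply/rowP; apply: ord4_ind; rewrite !mxE !inordK //= ?rmorphN /= ?conjCK //.
Qed.

Lemma hplane_indep (a b : CC) (x : 'rV[CC]_4) :
  x != 0 -> a *: x + b *: tau x = 0 -> a = 0 /\ b = 0.
Proof.
(* Typing the conjugates in [CC] (not in the closed field [conj] lives in)
   keeps the scalings below syntactically those of [E], so [rewrite E] works. *)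
move=> nx E; set a' : CC := a^*; set b' : CC := b^*.
have Etau : a' *: tau x - b' *: x = 0.
  by have := congr1 tau E; rewrite tauD !tauZ tauK tau0 scalerN addrC.
have : (a' * a + b * b') *: x =
    a' *: (a *: x + b *: tau x) - b *: (a' *: tau x - b' *: x).
  rewrite scalerDr scalerBr !scalerA [b * a']mulrC scalerDl opprB.
  by rewrite addrACA subrr addr0.
rewrite E Etau !scaler0 subr0 => /eqP; rewrite scaler_eq0 (negPf nx) orbF.
rewrite mulrC paddr_eq0 ?mul_conjC_ge0 //.
by rewrite !mul_conjC_eq0 => /andP[/eqP-> /eqP->].
Qed.

Lemma mul_row_mx_hplane (a b : 'M[CC]_1) (x : 'rV[CC]_4) :
  row_mx a b *m hplane x = a 0 0 *: x + b 0 0 *: tau x.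
Proof. by rewrite mul_row_col {1}[a]mx11_scalar {1}[b]mx11_scalar !mul_scalar_mx. Qed.

Lemma sub_hplaneP (z x : 'rV[CC]_4) :
  reflect (exists a b, z = a *: x + b *: tau x) (z <= hplane x)%MS.
Proof.
apply: (iffP submxP) => [[v ->] | [a [b ->]]].
  exists (@lsubmx _ 1 1 1 v 0 0), (@rsubmx _ 1 1 1 v 0 0).
  by rewrite -mul_row_mx_hplane hsubmxK.
by exists (row_mx a%:M b%:M); rewrite mul_row_mx_hplane !mxE !mulr1n.
Qed.

Lemma hplane_free (x : 'rV[CC]_4) : x != 0 -> row_free (hplane x).
Proof.
move=> nx; rewrite -kermx_eq0; apply/rowV0P => v /sub_kermxP.
rewrite -[v](@hsubmxK _ 1 1 1) mul_row_mx_hplane => /(hplane_indep nx)[a0 b0].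
by rewrite [lsubmx _]mx11_scalar [rsubmx _]mx11_scalar a0 b0 raddf0 row_mx0.
Qed.

Lemma rank_hplane (x : 'rV[CC]_4) : x != 0 -> \rank (hplane x) = 2%N.
Proof. by move/hplane_free/eqP. Qed.

Lemma tau_sub_hplane (z x : 'rV[CC]_4) :
  (z <= hplane x)%MS -> (tau z <= hplane x)%MS.
Proof.
case/sub_hplaneP=> a [b ->]; apply/sub_hplaneP; exists (- b^*), a^*.
by rewrite tauD !tauZ tauK scalerN scaleNr addrC.
Qed.

Lemma hplane_sub (z x : 'rV[CC]_4) :
  (z <= hplane x)%MS -> (hplane z <= hplane x)%MS.
Proof.
by move=> zx; have := col_mx_sub z (tau z) (hplane x); rewrite zx tau_sub_hplane.
Qed.

Lemma eqmx_hplane_of_sub (z x : 'rV[CC]_4) : z != 0 -> x != 0 ->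
  (z <= hplane x)%MS -> (hplane z == hplane x)%MS.
Proof.
move=> nz nx /hplane_sub zx.
by rewrite -(mxrank_leqif_eq zx).2 !rank_hplane.
Qed.

Lemma eqmx_hplane_of_cap (x y : 'rV[CC]_4) : x != 0 -> y != 0 ->
  (hplane x :&: hplane y != 0)%MS -> (hplane x == hplane y)%MS.
Proof.
move=> nx ny; rewrite -nz_row_eq0 => nz.
have := nz_row_sub (hplane x :&: hplane y)%MS; rewrite sub_capmx => /andP[zx zy].
have /eqmxP zxE := eqmx_hplane_of_sub nz nx zx.
have /eqmxP zyE := eqmx_hplane_of_sub nz ny zy.
by apply/eqmxP; exact: eqmx_trans (eqmx_sym zxE) zyE.
Qed.

Lemma det_hplane_neq0 (x y : 'rV[CC]_4) : x != 0 -> y != 0 ->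
  ~~ (hplane x == hplane y)%MS -> \det (col_mx (hplane x) (hplane y)) != 0.
Proof.
move=> nx ny nxy; rewrite -unitfE -unitmxE -row_free_unit -row_leq_rank -addsmxE.
have cap0 : (hplane x :&: hplane y <= (0 : 'M_4))%MS.
  by rewrite submx0; apply: contraR nxy; exact: eqmx_hplane_of_cap.
have /eqP-> :
    \rank (hplane x + hplane y)%MS == (\rank (hplane x) + \rank (hplane y))%N.
  by rewrite (mxrank_adds_leqif _ _).2.
by rewrite !rank_hplane.
Qed.

Lemma det4_laplace (R : comPzRingType) (f : nat -> nat -> R) :
  let minor r a b := f r a * f r.+1 b - f r b * f r.+1 a in
  \det (\matrix_(i < 4, j < 4) f i j) =
    minor 0%N 0%N 1%N * minor 2%N 2%N 3%N - minor 0%N 0%N 2%N * minor 2%N 1%N 3%N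
  + minor 0%N 0%N 3%N * minor 2%N 1%N 2%N + minor 0%N 1%N 2%N * minor 2%N 0%N 3%N
  - minor 0%N 1%N 3%N * minor 2%N 0%N 2%N + minor 0%N 2%N 3%N * minor 2%N 0%N 1%N.
Proof.
rewrite /= (expand_det_row _ ord0) !big_ord_recl big_ord0 /cofactor.
rewrite !(expand_det_row _ ord0) !big_ord_recl !big_ord0 /cofactor.
rewrite !(expand_det_row _ ord0) !big_ord_recl !big_ord0 /cofactor.
rewrite !det_mx11 !mxE /bump /=.
ring.
Qed.

Lemma col_mx_inord (R : Type) n (M N : 'M[R]_(2, n)) (i : nat) j : (i < 4)%N ->
  col_mx M N (inord i) j =
    if (i < 2)%N then M (inord i) j else N (inord (i - 2)) j.
Proof.
move=> i4; case: ifP => i2.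
  have -> : inord i = lshift 2 (inord i : 'I_2) by apply/val_inj; rewrite /= !inordK.
  exact: col_mxEu.
have -> : inord i = rshift 2 (inord (i - 2) : 'I_2).
  by apply/val_inj; rewrite /= !inordK ?subnKC //; lia.
exact: col_mxEd.
Qed.

Definition plucker_pairing (p q : 'I_6 -> CC) : CC :=
  p (inord 0) * q (inord 5) - p (inord 1) * q (inord 4) + p (inord 2) * q (inord 3)
  + p (inord 3) * q (inord 2) - p (inord 4) * q (inord 1) + p (inord 5) * q (inord 0).

Lemma det_col_mx_plucker_pairing (M N : 'M[CC]_(2, 4)) :
  \det (col_mx M N) = plucker_pairing (plucker M) (plucker N).
Proof.
have -> : col_mx M N = \matrix_(i < 4, j < 4) col_mx M N (inord i) (inord j).
  by apply/matrixP => i j; rewrite [RHS]mxE !inord_val.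
rewrite (det4_laplace (fun i j => col_mx M N (inord i) (inord j))) /=.
rewrite !col_mx_inord //= -[(2 - 2)%N]/0%N -[(3 - 2)%N]/1%N.
rewrite /plucker_pairing /plucker /plpair !inordK //=.
have e0 : inord 0 = 0 :> 'I_2 by apply/val_inj; rewrite /= inordK.
have e1 : inord 1 = 1 :> 'I_2 by apply/val_inj; rewrite /= inordK.
by rewrite !e0 !e1; ring.
Qed.

Lemma plucker_pairing_mulmx (M N : 'M[CC]_(2, 4)) (g : 'M[CC]_4) :
  plucker_pairing (plucker (M *m g)) (plucker (N *m g)) =
    plucker_pairing (plucker M) (plucker N) * \det g.
Proof. by rewrite -!det_col_mx_plucker_pairing -det_mulmx mul_col_mx. Qed.

Section BlockDegree.

Variable R : nzRingType.

Definition blockdeg (mo : 'X_{1..24}) (i : 'I_4) : nat :=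
  (\sum_(j < 24 | (j %/ 6)%N == i) mo j)%N.

Definition block_homog (d : 'I_4 -> nat) (p : {mpoly R[24]}) : Prop :=
  forall mo, mo \in msupp p -> forall i, blockdeg mo i = d i.

Lemma blockdegD (m1 m2 : 'X_{1..24}) i :
  blockdeg (m1 + m2)%MM i = (blockdeg m1 i + blockdeg m2 i)%N.
Proof. by rewrite /blockdeg -big_split; apply: eq_bigr => j _; rewrite mnmDE. Qed.

Lemma blockdegU (u : 'I_24) i : blockdeg U_(u)%MM i = ((u %/ 6)%N == i : nat).
Proof.
rewrite /blockdeg; have [ui|ui] := eqVneq (u %/ 6)%N (i : nat).
  rewrite (bigD1 u) ?ui //= mnm1E eqxx big1 ?addn0 // => j /andP[_ ju].
  by rewrite mnm1E eq_sym (negPf ju).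
rewrite big1 // => j ji; rewrite mnm1E; case: eqP => // uj.
by rewrite uj (eqP ji) eqxx in ui.
Qed.

Lemma block_homogD d p q :
  block_homog d p -> block_homog d q -> block_homog d (p + q).
Proof.
by move=> hp hq mo /msuppD_le; rewrite mem_cat => /orP[]; [exact: hp | exact: hq].
Qed.

Lemma block_homogN d p : block_homog d p -> block_homog d (- p).
Proof. by move=> hp mo; rewrite (perm_mem (msuppN p)); exact: hp. Qed.

Lemma block_homogB d p q :
  block_homog d p -> block_homog d q -> block_homog d (p - q).
Proof. by move=> hp hq; apply: block_homogD (block_homogN hq). Qed.

Lemma block_homogM d1 d2 p q : block_homog d1 p -> block_homog d2 q ->
  block_homog (fun i => d1 i + d2 i)%N (p * q).
Proof.
move=> hp hq mo /msuppM_le /allpairsP [[m1 m2] /= [h1 h2 ->]] i.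
by rewrite blockdegD (hp _ h1) (hq _ h2).
Qed.

Lemma block_homogXX (u v : 'I_24) :
  block_homog (fun i => ((u %/ 6)%N == i : nat) + ((v %/ 6)%N == i : nat))%N
    ('X_u * 'X_v).
Proof.
move=> mo; rewrite -mpolyXD msuppX mem_seq1 => /eqP -> i.
by rewrite blockdegD !blockdegU.
Qed.

End BlockDegree.

Definition pvar (a : 'I_4) (l : nat) : 'I_24 := inord (a * 6 + l).

Lemma pvar_div a l : (l < 6)%N -> (pvar a l %/ 6)%N = a.
Proof.
move=> l6; rewrite /pvar inordK; last by have := ltn_ord a; lia.
by rewrite divnMDl // divn_small // addn0.
Qed.

Lemma plucker4_pvar Ms a l :
  (l < 6)%N -> plucker4 Ms (pvar a l) = plucker (Ms a) (inord l).
Proof.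
move=> l6; rewrite /plucker4 pvar_div // inord_val /pvar inordK.
  by rewrite modnMDl modn_small.
by have := ltn_ord a; lia.
Qed.

Definition plucker_pairing_poly (a b : 'I_4) : {mpoly CC[24]} :=
  'X_(pvar a 0) * 'X_(pvar b 5) - 'X_(pvar a 1) * 'X_(pvar b 4)
  + 'X_(pvar a 2) * 'X_(pvar b 3) + 'X_(pvar a 3) * 'X_(pvar b 2)
  - 'X_(pvar a 4) * 'X_(pvar b 1) + 'X_(pvar a 5) * 'X_(pvar b 0).

Definition pair_deg (a b : 'I_4) (i : 'I_4) : nat := ((a == i) + (b == i))%N.

Lemma block_homog_plucker_pairing_poly (a b : 'I_4) :
  block_homog (pair_deg a b) (plucker_pairing_poly a b).
Proof.
have XX l l' : (l < 6)%N -> (l' < 6)%N ->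
    block_homog (pair_deg a b) ('X_(pvar a l) * 'X_(pvar b l')).
  by move=> l6 l'6 mo /block_homogXX; rewrite !pvar_div.
rewrite /plucker_pairing_poly.
by repeat (apply: block_homogB || apply: block_homogD); apply: XX.
Qed.

Lemma meval_plucker_pairing_poly (a b : 'I_4) Ms :
  (plucker_pairing_poly a b).@[plucker4 Ms] =
    plucker_pairing (plucker (Ms a)) (plucker (Ms b)).
Proof. by rewrite !(mevalD, mevalB, mevalN, mevalM, mevalXU) !plucker4_pvar. Qed.

Lemma semistable_of_two_pairs (xs : 'I_4 -> 'rV[CC]_4) (a b c d : 'I_4) :
  (forall i, pair_deg a b i + pair_deg c d i = 1)%N -> (forall i, xs i != 0) ->
  ~~ (hplane (xs a) == hplane (xs b))%MS -> ~~ (hplane (xs c) == hplane (xs d))%MS ->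
  semistable_P1H xs.
Proof.
move=> cover nz nab ncd.
exists 1%N, (plucker_pairing_poly a b * plucker_pairing_poly c d).
split=> //; split; [|split].
- move=> mo hmo i; rewrite -[RHS](cover i).
  exact: (block_homogM (@block_homog_plucker_pairing_poly a b)
                       (@block_homog_plucker_pairing_poly c d)) hmo i.
- move=> g detg Ms _; rewrite !mevalM !meval_plucker_pairing_poly.
  by rewrite !plucker_pairing_mulmx detg !mulr1.
- rewrite mevalM !meval_plucker_pairing_poly -!det_col_mx_plucker_pairing.
  by rewrite mulf_neq0 // det_hplane_neq0.
Qed.

Definition blk (r : 'I_24) : 'I_4 := inord (r %/ 6).

Lemma blkE (r : 'I_24) (i : 'I_4) : (blk r == i) = ((r %/ 6)%N == i).
Proof. by rewrite /blk -val_eqE /= inordK //; have := ltn_ord r; lia. Qed.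

Lemma meval_block_scale m (F : {mpoly CC[24]}) (s : 'I_4 -> CC) v :
  multihom m F -> F.@[fun r => s (blk r) * v r] = (\prod_i s i) ^+ m * F.@[v].
Proof.
move=> hF; rewrite !mevalE big_distrr /=; apply: eq_big_seq => mo hm.
rewrite mulrCA; congr (_ * _).
under eq_bigr do rewrite exprMn.
rewrite big_split /=; congr (_ * _).
rewrite (partition_big blk predT) //= -prodrXl.
apply: eq_bigr => i _.
transitivity (\prod_(r < 24 | blk r == i) s i ^+ mo r).
  by apply: eq_bigr => r /eqP ->.
rewrite prodrXr -(hF mo hm i); congr (_ ^+ _).
by apply: eq_bigl => r; exact: blkE.
Qed.

Lemma horner_mmap (R : comNzRingType) n (p : {mpoly R[n]}) (h : 'I_n -> {poly R}) t :
  (mmap polyC h p).[t] = p.@[fun i => (h i).[t]].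
Proof.
rewrite /mmap horner_sum mevalE; apply: eq_bigr => mo _.
by rewrite hornerCM horner_prod; congr (_ * _); apply: eq_bigr => i _; rewrite horner_exp.
Qed.

Lemma eq0_of_eq_exprM_horner (R : numDomainType) (P : {poly R}) (c : R) e :
  (0 < e)%N -> (forall t : R, t != 0 -> c = t ^+ e * P.[t]) -> c = 0.
Proof.
move=> e0 ceq; pose Q := 'X^e * P - c%:P.
have rootQ t : t != 0 -> root Q t.
  move=> nt; rewrite /root /Q hornerD hornerN hornerM hornerXn hornerC.
  by rewrite -ceq // subrr.
have Q0 : Q = 0.
  apply/eqP/negPn/negP => nQ.
  pose rs := [seq n.+1%:R : R | n <- iota 0 (size Q)].
  have rootsQ : all (root Q) rs.
    by apply/allP => _ /mapP[n _ ->]; apply: rootQ; rewrite pnatr_eq0.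
  have uniq_rs : uniq rs.
    by rewrite map_inj_uniq ?iota_uniq // => a b /eqP; rewrite eqr_nat => /eqP [].
  by have := max_poly_roots nQ rootsQ uniq_rs; rewrite size_map size_iota ltnn.
have := congr1 (fun q : {poly R} => q`_0) Q0.
by rewrite /Q coefB coefXnM e0 coefC eqxx coef0 sub0r => /eqP; rewrite oppr_eq0 => /eqP.
Qed.

Definition one_param_mx (R : fieldType) (t : R) : 'M[R]_4 :=
  diag_mx (\row_(j < 4) if (j < 2)%N then t else t^-1).

Lemma det_one_param_mx (R : fieldType) (t : R) :
  t != 0 -> \det (one_param_mx t) = 1.
Proof. by move=> nt; rewrite det_diag !big_ord_recl big_ord0 !mxE /=; field. Qed.

Lemma one_param_mxE (R : fieldType) (t : R) :
  one_param_mx t = t *: pid_mx 2 + t^-1 *: copid_mx 2.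
Proof.
apply/matrixP => i j; rewrite !mxE.
case: i j => [[|[|[|[|i]]]] ?] [[|[|[|[|j]]]] ?] //=;
  by rewrite ?mulr0n ?mulr1n ?subrr ?subr0 ?mulr0 ?mulr1 ?addr0 ?add0r.
Qed.

Lemma plucker_scale (t : CC) (A : 'M[CC]_(2, 4)) l :
  plucker (t *: A) l = t ^+ 2 * plucker A l.
Proof. by rewrite /plucker !mxE; ring. Qed.

Definition pencil_poly (A1 A2 : 'M[CC]_(2, 4)) (l : 'I_6) : {poly CC} :=
  (plucker A1 l)%:P * 'X^4
  + (plucker (A1 + A2) l - plucker A1 l - plucker A2 l)%:P * 'X^2
  + (plucker A2 l)%:P.

Lemma plucker_pencil (t : CC) (A1 A2 : 'M[CC]_(2, 4)) l : t != 0 ->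
  plucker (t *: A1 + t^-1 *: A2) l = (t ^+ 2)^-1 * (pencil_poly A1 A2 l).[t].
Proof.
move=> nt; rewrite /pencil_poly !hornerD !hornerCM !hornerXn hornerC.
by rewrite /plucker !mxE; field.
Qed.

Lemma pid_mul_one_param_mx (R : fieldType) (t : R) :
  (pid_mx 2 : 'M_(2, 4)) *m one_param_mx t = t *: pid_mx 2.
Proof.
rewrite one_param_mxE mulmxDr -!scalemxAr pid_mx_id // mul_pid_mx_copid //.
by rewrite scaler0 addr0.
Qed.

Section Destabilization.

Variables (Ms : 'I_4 -> 'M[CC]_(2, 4)) (U : 'M[CC]_4) (k : 'I_4).
Hypothesis unitU : U \in unitmx.
Hypothesis subU : forall j, j != k -> (Ms j <= (pid_mx 2 : 'M_(2, 4)) *m U)%MS.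

Local Notation g t := (invmx U *m one_param_mx t *m U).

Lemma det_conj_one_param t : t != 0 -> \det (g t) = 1.
Proof.
move=> nt; rewrite !det_mulmx det_inv det_one_param_mx // mulr1.
by rewrite mulVf // -unitfE -unitmxE.
Qed.

Lemma mul_conj_one_param_sub n (N : 'M_(n, 4)) t :
  (N <= (pid_mx 2 : 'M_(2, 4)) *m U)%MS -> N *m g t = t *: N.
Proof.
case/submxP=> K ->; rewrite !mulmxA mulmxK // -(mulmxA K) pid_mul_one_param_mx.
by rewrite -scalemxAr -scalemxAl.
Qed.

Definition one_param_weight (t : CC) (b : 'I_4) : CC :=
  if b == k then (t ^+ 2)^-1 else t ^+ 2.

Definition one_param_pencil (r : 'I_24) : {poly CC} :=
  if blk r == k then
    pencil_poly (Ms k *m invmx U *m pid_mx 2 *m U)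
      (Ms k *m invmx U *m copid_mx 2 *m U) (inord (r %% 6))
  else (plucker4 Ms r)%:P.

Lemma plucker4_conj_one_param t : t != 0 ->
  plucker4 (fun j => Ms j *m g t) =1
    (fun r => one_param_weight t (blk r) * (one_param_pencil r).[t]).
Proof.
move=> nt r; rewrite /plucker4 -/(blk r) /one_param_weight /one_param_pencil.
case: eqP => [->|/eqP rk]; last first.
  by rewrite mul_conj_one_param_sub ?subU // plucker_scale hornerC.
rewrite one_param_mxE !mulmxA mulmxDr mulmxDl -!scalemxAr -!scalemxAl.
by rewrite plucker_pencil.
Qed.

Lemma prod_one_param_weight t : t != 0 -> \prod_i one_param_weight t i = t ^+ 4.
Proof.
move=> nt; rewrite (bigD1 k) //= /one_param_weight eqxx.
rewrite (eq_bigr (fun _ => t ^+ 2)) => [|j /negPf ->] //.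
by rewrite prodr_const cardC1 card_ord /=; field.
Qed.

Lemma invariant_eq0_of_destabilized m (F : {mpoly CC[24]}) : (0 < m)%N ->
  multihom m F -> sl4_invariant F -> (forall j, \rank (Ms j) = 2%N) ->
  F.@[plucker4 Ms] = 0.
Proof.
move=> m0 hF invF rk.
apply: (@eq0_of_eq_exprM_horner _ (mmap polyC one_param_pencil F) _ (4 * m)).
  by rewrite muln_gt0 m0.
move=> t nt; rewrite -(invF _ (det_conj_one_param nt) Ms rk).
rewrite (meval_eq F (plucker4_conj_one_param nt)) (meval_block_scale _ _ hF).
by rewrite prod_one_param_weight // -exprM horner_mmap.
Qed.

End Destabilization.

Lemma card_class_gt2 (e : rel 'I_4) (p q r : 'I_4) : reflexive e ->
  p != q -> q != r -> r != p -> e q p -> e r p -> (2 < #|[set j | e j p]|)%N.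
Proof.
move=> refl pq qr rp eqp erp; apply/card_gt2P; exists p, q, r.
by rewrite !inE refl eqp erp pq qr rp.
Qed.

Lemma perfect_matching_of_small_classes (e : rel 'I_4) :
  reflexive e -> ssrbool.symmetric e -> (forall i, #|[set j | e j i]| <= 2)%N ->
  exists a b c d : 'I_4,
    [/\ forall i, (pair_deg a b i + pair_deg c d i = 1)%N, ~~ e a b & ~~ e c d].
Proof.
move=> refl sym small; pose o n : 'I_4 := inord n.
have neq m n : (m < 4)%N -> (n < 4)%N -> m != n -> o m != o n.
  by move=> m4 n4 mn; rewrite -val_eqE /= !inordK.
have no_triple p q r : p != q -> q != r -> r != p -> e q p -> e r p -> False.
  move=> pq qr rp eqp erp; have := small p.
  by rewrite leqNgt (card_class_gt2 refl pq qr rp eqp erp).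
have [/andP[n01 n23] | ] := boolP (~~ e (o 0) (o 1) && ~~ e (o 2) (o 3)).
  exists (o 0), (o 1), (o 2), (o 3); split=> //.
  by apply: ord4_ind; rewrite /pair_deg -!val_eqE /= !inordK.
have [/andP[n02 n13] | ] := boolP (~~ e (o 0) (o 2) && ~~ e (o 1) (o 3)).
  exists (o 0), (o 2), (o 1), (o 3); split=> //.
  by apply: ord4_ind; rewrite /pair_deg -!val_eqE /= !inordK.
rewrite !negb_and !negbK => /orP[e02 | e13] /orP[e01 | e23]; exfalso.
- by apply: (no_triple (o 0) (o 1) (o 2)); rewrite ?neq // sym.
- by apply: (no_triple (o 2) (o 3) (o 0)); rewrite ?neq // sym.
- by apply: (no_triple (o 1) (o 0) (o 3)); rewrite ?neq // sym.
- by apply: (no_triple (o 3) (o 2) (o 1)); rewrite ?neq // sym.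
Qed.

Lemma all_but_one_of_card_gt2 (S : {set 'I_4}) :
  (2 < #|S|)%N -> exists k, forall j, j != k -> j \in S.
Proof.
move=> S3; have : (#|~: S| <= 1)%N by have := cardsC S; rewrite card_ord; lia.
move=> /card_le1P S'1; have [S'0 | [k kS']] := set_0Vmem (~: S).
  by exists ord0 => j _; rewrite -[j \in S]negbK -in_setC S'0 inE.
exists k => j jk; apply/negPn/negP => jS'; rewrite -in_setC in jS'.
by move: (S'1 k kS' j); rewrite jS' inE (negPf jk).
Qed.

Lemma sub_pid_mx_row_ebase (F : fieldType) m n (A : 'M[F]_(m, n)) :
  (A <= (pid_mx (\rank A) : 'M_(m, n)) *m row_ebase A)%MS.
Proof. by rewrite -{1}(mulmx_ebase A) -mulmxA submxMl. Qed.

Lemma not_semistable_of_multiplicity_gt2 (xs : 'I_4 -> 'rV[CC]_4) i :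
  (forall j, xs j != 0) -> (2 < multiplicity xs i)%N -> ~ semistable_P1H xs.
Proof.
move=> nz /all_but_one_of_card_gt2 [k subk] [m [F [m0 [hF [invF nzF]]]]].
have rk j : \rank (hplane (xs j)) = 2%N by exact: rank_hplane.
have sub j : j != k ->
    (hplane (xs j) <= (pid_mx 2 : 'M_(2, 4)) *m row_ebase (hplane (xs i)))%MS.
  move/subk; rewrite inE => /andP[ji _]; apply: submx_trans ji _.
  by have := sub_pid_mx_row_ebase (hplane (xs i)); rewrite rk.
have := invariant_eq0_of_destabilized (row_ebase_unit _) sub m0 hF invF rk.
by move/eqP; rewrite (negPf nzF).
Qed.

Theorem proposition5p7 (xs : 'I_4 -> 'rV[CC]_4) :
  (forall i, xs i != 0) ->
  (semistable_P1H xs <-> forall i : 'I_4, (multiplicity xs i <= 2)%N).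
Proof.
move=> nz; split=> [ss i | small].
  by rewrite leqNgt; apply/negP => /(not_semistable_of_multiplicity_gt2 nz).
pose e j i := (hplane (xs j) == hplane (xs i))%MS.
have refl_e : reflexive e by move=> j; rewrite /e submx_refl.
have sym_e : ssrbool.symmetric e by move=> j j'; rewrite /e andbC.
have [a [b [c [d [cover nab ncd]]]]] :=
  perfect_matching_of_small_classes refl_e sym_e small.
exact: semistable_of_two_pairs cover nz nab ncd.
Qed.
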